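(* Let $R,R'\subseteq S_n$ be the top-$l$ and top-$m$ partial rankings $R: a_1\succ\cdots\succ a_l\succ[n]\setminus\{a_1,\dots,a_l\}$ and $R': b_1\succ\cdots\succ b_m\succ[n]\setminus\{b_1,\dots,b_m\}$. Let $\{b_{i_1},\dots,b_{i_q}\}=\{b_1,\dots,b_m\}\setminus\{a_1,\dots,a_l\}$ with $i_1<\cdots<i_q$, and let $R''\subseteq R$ be the top-$(l+q)$ partial ranking $a_1\succ\cdots\succ a_l\succ b_{i_1}\succ\cdots\succ b_{i_q}\succ[n]\setminus\{a_1,\dots,a_l,b_1,\dots,b_m\}$. If $\tau$ is uniformly distributed on $R'$, then $\Pi_R(\tau)$ is uniformly distributed on $R''$.
   Context: $S_n$ is the symmetric group on $[n]$; $\sigma\in S_n$ is identified with the full ranking $\sigma(1)\succ\cdots\succ\sigma(n)$. For distinct items $x,y$, $\{x,y\}$ is discordant for $\sigma,\tau$ if $(\sigma^{-1}(x)-\sigma^{-1}(y))(\tau^{-1}(x)-\tau^{-1}(y))<0$. The Kendall distance $d(\sigma,\tau)$ is the number of unordered discordant pairs. For $0\le k\le n$ and distinct $c_1,\dots,c_k\in[n]$, the top-$k$ partial ranking $c_1\succ\cdots\succ c_k\succ[n]\setminus\{c_1,\dots,c_k\}$ is the set $\{\sigma\in S_n:\sigma(i)=c_i,\ i\le k\}$. For $\tau\in S_n$, $\Pi_R(\tau)$ denotes the unique element of $R$ minimising $\rho\mapsto d(\rho,\tau)$ over $\rho\in R$. *)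

From HB Require Import structures.
From mathcomp Require Import all_boot all_order all_algebra all_fingroup.
Set Implicit Arguments. Unset Strict Implicit. Unset Printing Implicit Defensive.
Import Order.TTheory GRing.Theory Num.Theory.

(* Items [n] are 'I_n (0-indexed); positions are also 'I_n (0-indexed).
   sigma : 'S_n maps a position i to the item sigma i ranked at that position,
   so sigma^-1 x is the position of item x. *)

Definition discordant n (sigma tau : 'S_n) (x y : 'I_n) : bool :=
  (x != y) &&
  (((((sigma^-1)%g x : nat)%:Z - ((sigma^-1)%g y : nat)%:Z) *
    (((tau^-1)%g x : nat)%:Z - ((tau^-1)%g y : nat)%:Z) < 0)%R).

Definition kendall n (sigma tau : 'S_n) : nat :=
  #|[set xy : 'I_n * 'I_n | (xy.1 < xy.2) && discordant sigma tau xy.1 xy.2]|.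

Definition topk n (c : seq 'I_n) : {set 'S_n} :=
  [set sigma : 'S_n | [forall i : 'I_n, (i < size c) ==> (sigma i == nth i c i)]].

(* Pi_R(tau): the (unique, per the paper) minimiser of rho |-> d(rho,tau) over R;
   chosen among the minimisers, default tau if R is empty. *)
Definition proj n (R : {set 'S_n}) (tau : 'S_n) : 'S_n :=
  odflt tau [pick rho in R |
    [forall rho' in R, kendall rho tau <= kendall rho' tau]].

From HB Require Import structures.
From mathcomp Require Import all_boot all_order all_algebra all_fingroup.
Set Implicit Arguments. Unset Strict Implicit. Unset Printing Implicit Defensive.
Import GRing.Theory Num.Theory.

(* Projecting tau onto the top-a ranking R keeps a on top and lists the other
   items in the order tau gives them; pair by pair, this permutation has no
   more discordances with tau than any other element of R, so it is the
   minimiser chosen by [proj].  When tau ranks b on top, it ranks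
   [top_union a b] on top, i.e. it lies in R''.  The fibres over R'' all have
   the same size: for rho, rho' in R'', right multiplication by rho^-1 rho'
   fixes every item of [top_union a b], hence maps the fibre over rho
   injectively into the fibre over rho'. *)

Lemma index_filter_lt (T : eqType) (p : pred T) (s : seq T) x y :
  p y -> x \in filter p s ->
  (index y (filter p s) < index x (filter p s)) = (index y s < index x s).
Proof.
move=> py; elim: s => //= z s IH; case pz: (p z) => /=; last first.
  have zy : z != y by apply: contraFneq pz => ->.
  move=> xs; have zx : z != x.
    by apply: contraFneq pz => ->; move: xs; rewrite mem_filter => /andP[].
  by rewrite (negbTE zx) (negbTE zy) ltnS IH.
rewrite inE; case: (eqVneq z x) => [<- _|zx /IH]; first by rewrite !ltn0.
by case: (z == y) => //; rewrite ltnS.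
Qed.

Section Positions.
Variable n : nat.
Implicit Types (s t g : 'S_n) (x y : 'I_n) (c : seq 'I_n).

Definition pos s x : nat := (s^-1)%g x.

Lemma pos_inj s : injective (pos s).
Proof. by move=> x y /val_inj /perm_inj. Qed.

Lemma pos_ltNgt s x y : x != y -> (pos s x < pos s y) = ~~ (pos s y < pos s x).
Proof. by move=> xy; rewrite ltn_neqAle -leqNgt (inj_eq (@pos_inj s)) xy. Qed.

Lemma card_ord_lt k : k <= n -> #|[set i : 'I_n | i < k]| = k.
Proof.
move=> kn; have -> : [set i : 'I_n | i < k] = widen_ord kn @: [set: 'I_k].
  apply/setP => i; rewrite inE; apply/idP/imsetP => [ik|[j _ ->]]; last by case: j.
  by exists (Ordinal ik) => //; apply/val_inj.
rewrite card_imset ?cardsT ?card_ord // => i j /(congr1 val) ij.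
exact: val_inj.
Qed.

Lemma card_pos_lt s x : #|[set y | pos s y < pos s x]| = pos s x.
Proof.
have -> : [set y | pos s y < pos s x] = (s^-1)%g @^-1: [set i : 'I_n | i < pos s x].
  by apply/setP => y; rewrite !inE.
rewrite card_preimset; last exact: perm_inj.
by rewrite card_ord_lt //; apply: ltnW; apply: ltn_ord.
Qed.

Lemma eq_perm_pos_lt s t :
  (forall x y, (pos s x < pos s y) = (pos t x < pos t y)) -> s = t.
Proof.
move=> st; apply: invg_inj; apply/permP => x; apply/val_inj.
rewrite /= -/(pos s x) -/(pos t x) -card_pos_lt -[RHS]card_pos_lt.
by apply: eq_card => y; rewrite !inE st.
Qed.

Lemma discordantE s t x y : discordant s t x y =
  (x != y) && ((pos s x < pos s y) != (pos t x < pos t y)).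
Proof.
rewrite /discordant mulr_lt0 !subr_lt0 !ltz_nat !subr_eq0 !eqz_nat.
case: eqVneq => [-> //|xy] /=.
rewrite (inj_eq (@pos_inj s)) (inj_eq (@pos_inj t)) xy /=.
by case: (pos s x < _); case: (pos t x < _).
Qed.

Lemma discordantC s t x y : discordant s t x y = discordant s t y x.
Proof.
rewrite !discordantE eq_sym; case: eqVneq => //= yx.
rewrite eq_sym in yx.
by rewrite (pos_ltNgt s yx) (pos_ltNgt t yx); case: (_ < _); case: (_ < _).
Qed.

Lemma size_uniq_ord c : uniq c -> size c <= n.
Proof.
by move=> uc; rewrite -(card_uniqP uc); apply: leq_trans (max_card _) _; rewrite card_ord.
Qed.

Lemma topkP c s : uniq c ->
  reflect {in c, forall x, pos s x = index x c} (s \in topk c).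
Proof.
move=> uc; rewrite inE; apply: (iffP forallP) => [top x xc | posE i].
  have ix : index x c < n by apply: leq_trans (size_uniq_ord uc); rewrite index_mem.
  have /implyP := top (Ordinal ix); rewrite index_mem xc nth_index // => /(_ isT)/eqP sx.
  by rewrite /pos -{1}sx permK.
apply/implyP => ic; have /posE : nth i c i \in c by apply: mem_nth.
rewrite index_uniq // => si; apply/eqP.
by rewrite -[X in s X](_ : (s^-1)%g (nth i c i) = i) ?permKV //; apply: val_inj.
Qed.

Lemma topk_pos_ge c s y : s \in topk c -> y \notin c -> size c <= pos s y.
Proof.
rewrite inE => /forallP /(_ ((s^-1)%g y)) /implyP top; apply: contraR; rewrite -ltnNge.
by move=> lt; have /eqP := top lt; rewrite permKV => ->; apply: mem_nth.
Qed.

Lemma topk_pos_lt c s x y : uniq c -> s \in topk c -> x \in c ->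
  (pos s x < pos s y) = (index x c < index y c).
Proof.
move=> uc sc xc; have /(topkP _ uc) posE := sc; rewrite posE //.
case yc: (y \in c); first by rewrite posE.
rewrite (memNindex (negbT yc)) index_mem xc.
by apply: leq_trans (topk_pos_ge sc (negbT yc)); rewrite index_mem.
Qed.

Lemma topk_pos_gt c s x y : uniq c -> s \in topk c -> x \in c ->
  (pos s y < pos s x) = (index y c < index x c).
Proof.
move=> uc sc xc; have /(topkP _ uc) posE := sc; rewrite (posE x xc).
case yc: (y \in c); first by rewrite posE.
have xlt : index x c < size c by rewrite index_mem.
rewrite (memNindex (negbT yc)) !ltnNge (ltnW xlt).
by rewrite (leq_trans (ltnW xlt) (topk_pos_ge sc (negbT yc))).
Qed.

Lemma pos_eq_index c s x : uniq c -> x \in c ->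
  (forall y, (pos s y < pos s x) = (index y c < index x c)) ->
  pos s x = index x c.
Proof.
move=> uc xc ltE; rewrite -card_pos_lt.
have -> : [set y | pos s y < pos s x] = [set y in take (index x c) c].
  by apply/setP => y; rewrite !inE ltE in_take_leq ?index_size.
by rewrite cardsE (card_uniqP (take_uniq _ uc)) size_takel ?index_size.
Qed.

Lemma topk_catl c d : topk (c ++ d) \subset topk c.
Proof.
apply/subsetP => s; rewrite !inE => /forallP top; apply/forallP => i.
apply/implyP => ic; have /implyP := top i.
by rewrite size_cat nth_cat ic (leq_trans ic (leq_addr _ _)); apply.
Qed.

Lemma pos_mulg s g x : pos (s * g) x = pos s ((g^-1)%g x).
Proof. by rewrite /pos invMg permM. Qed.

Lemma topk_mulg c s g :
  {in c, forall x, g x = x} -> s \in topk c -> (s * g)%g \in topk c.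
Proof.
rewrite !inE => gc /forallP top; apply/forallP => i; apply/implyP => ic.
have /implyP/(_ ic)/eqP si := top i.
by rewrite permM si gc ?mem_nth.
Qed.

End Positions.

Section Projection.
Variables (n : nat) (a : seq 'I_n).
Hypothesis ua : uniq a.
Implicit Types (s t rho tau g : 'S_n) (x y : 'I_n).

Definition proj_spec rho tau : Prop :=
  rho \in topk a /\ forall x y, x \notin a -> y \notin a ->
    (pos rho x < pos rho y) = (pos tau x < pos tau y).

Lemma proj_spec_uniq rho rho' tau :
  proj_spec rho tau -> proj_spec rho' tau -> rho = rho'.
Proof.
move=> [ra agr] [r'a agr']; apply: eq_perm_pos_lt => x y.
case xa: (x \in a); first by rewrite (topk_pos_lt _ ua ra xa) (topk_pos_lt _ ua r'a xa).
case ya: (y \in a); first by rewrite (topk_pos_gt _ ua ra ya) (topk_pos_gt _ ua r'a ya).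
by rewrite agr ?xa ?ya // agr' ?xa ?ya.
Qed.

Lemma proj_spec_mulg rho tau g : {in a, forall x, g x = x} ->
  proj_spec rho tau -> proj_spec (rho * g) (tau * g).
Proof.
move=> ga [ra agr]; split; first exact: topk_mulg.
have gVa z : z \notin a -> (g^-1)%g z \notin a.
  by apply: contra => /[dup] /ga gz; rewrite -{2}(permKV g z) gz.
by move=> x y xa ya; rewrite !pos_mulg agr ?gVa.
Qed.

Definition ahead tau x := [set y | (y \notin a) && (pos tau y < pos tau x)].

Lemma card_ahead_lt tau x y : x \notin a -> pos tau x < pos tau y ->
  #|ahead tau x| < #|ahead tau y|.
Proof.
move=> xa xy; apply: proper_card; apply/properP; split.
  by apply/subsetP => z; rewrite !inE => /andP[-> /= zx]; apply: ltn_trans zx xy.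
by exists x; rewrite !inE ?xa ?xy ?ltnn.
Qed.

Lemma card_ahead_ub tau x : x \notin a -> size a + #|ahead tau x| < n.
Proof.
move=> xa; apply: (@leq_trans (size a + #|[predC a]|)).
  rewrite -addnS leq_add2l; apply: proper_card; apply/properP; split.
    by apply/subsetP => z; rewrite !inE => /andP[].
  by exists x; rewrite !inE ?xa ?ltnn.
by have := cardC (mem a); rewrite card_ord (card_uniqP ua) => ->.
Qed.

Definition proj_pos tau x : nat :=
  if x \in a then index x a else size a + #|ahead tau x|.

Lemma proj_pos_mem tau x : x \in a -> proj_pos tau x = index x a.
Proof. by move=> xa; rewrite /proj_pos xa. Qed.

Lemma proj_pos_notin tau x : x \notin a -> proj_pos tau x = size a + #|ahead tau x|.
Proof. by move=> xa; rewrite /proj_pos (negbTE xa). Qed.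

Lemma proj_pos_lt_n tau x : proj_pos tau x < n.
Proof.
have [xa|xa] := boolP (x \in a); last by rewrite proj_pos_notin ?card_ahead_ub.
by rewrite proj_pos_mem //; apply: leq_trans (size_uniq_ord ua); rewrite index_mem.
Qed.

Lemma proj_pos_ltE tau x y : x \notin a -> y \notin a ->
  (proj_pos tau x < proj_pos tau y) = (pos tau x < pos tau y).
Proof.
move=> xa ya; rewrite !proj_pos_notin // ltn_add2l.
case: (ltngtP (pos tau x) (pos tau y)) => [xy|yx|/pos_inj ->]; last by rewrite ltnn.
- exact: card_ahead_lt.
- by apply/negbTE; rewrite -leqNgt ltnW // card_ahead_lt.
Qed.

Lemma proj_pos_inj tau : injective (proj_pos tau).
Proof.
have mem_lt_notin x y : x \in a -> y \notin a -> proj_pos tau x < proj_pos tau y.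
  move=> xa ya; rewrite proj_pos_mem // proj_pos_notin //.
  by apply: leq_trans (leq_addr _ _); rewrite index_mem.
move=> x y E; have [xa|xa] := boolP (x \in a); have [ya|ya] := boolP (y \in a).
- by rewrite -(nth_index x xa) -(nth_index x ya) -!(proj_pos_mem tau) // E.
- by have := mem_lt_notin x y xa ya; rewrite E ltnn.
- by have := mem_lt_notin y x ya xa; rewrite E ltnn.
move: (proj_pos_ltE tau xa ya) (proj_pos_ltE tau ya xa); rewrite E ltnn.
by case: ltngtP => // /pos_inj.
Qed.

Lemma proj_spec_exists tau : exists rho, proj_spec rho tau.
Proof.
pose f x := Ordinal (proj_pos_lt_n tau x).
have f_inj : injective f by move=> x y /(congr1 val) /proj_pos_inj.
have posE x : pos ((perm f_inj)^-1)%g x = proj_pos tau x by rewrite /pos invgK permE.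
exists ((perm f_inj)^-1)%g; split.
  by apply/(topkP _ ua) => x xa; rewrite posE proj_pos_mem.
by move=> x y xa ya; rewrite !posE proj_pos_ltE.
Qed.

Definition discord_set s t :=
  [set xy : 'I_n * 'I_n | (xy.1 < xy.2) && discordant s t xy.1 xy.2].

Lemma discord_set_proj_spec rho0 rho tau : proj_spec rho0 tau -> rho \in topk a ->
  discord_set rho0 tau \subset discord_set rho tau.
Proof.
move=> [r0a agr] ra; apply/subsetP => -[x y]; rewrite !inE /= => /andP[-> /=].
rewrite !discordantE => /andP[-> D] /=.
case xa: (x \in a).
  by rewrite (topk_pos_lt _ ua ra xa) -(topk_pos_lt _ ua r0a xa).
case ya: (y \in a).
  by rewrite (topk_pos_gt _ ua ra ya) -(topk_pos_gt _ ua r0a ya).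
by rewrite agr ?xa ?ya // eqxx in D.
Qed.

Lemma proj_spec_of_discord_set_sub rho0 rho tau :
  proj_spec rho0 tau -> rho \in topk a ->
  discord_set rho tau \subset discord_set rho0 tau -> proj_spec rho tau.
Proof.
move=> [_ agr] ra sub; split => // x y xa ya.
have concord u v : u \notin a -> v \notin a -> ~~ discordant rho tau u v.
  wlog uv : u v / u < v => [W ua' va'|ua' va'].
    case: (ltngtP u v) => [uv|vu|/val_inj ->]; first exact: W.
      by rewrite discordantC; apply: W.
    by rewrite discordantE eqxx.
  apply/negP => d; have := subsetP sub (u, v); rewrite !inE /= uv d.
  by rewrite discordantE agr // eqxx andbF => /(_ isT).
have [->|xy] := eqVneq x y; first by rewrite !ltnn.
by have := concord x y xa ya; rewrite discordantE xy negbK => /eqP.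
Qed.

Lemma proj_specP tau : proj_spec (proj (topk a) tau) tau.
Proof.
have [r0 spec0] := proj_spec_exists tau.
have r0a : r0 \in topk a by case: spec0.
have r0_min rho : rho \in topk a -> kendall r0 tau <= kendall rho tau.
  by move=> ra; apply/subset_leq_card/discord_set_proj_spec.
rewrite /proj; case: pickP => [r /andP[ra /forallP r_min] | no_min] /=.
  apply: (proj_spec_of_discord_set_sub spec0 ra).
  have /implyP/(_ r0a) kr := r_min r0.
  have /eqP <- : discord_set r0 tau == discord_set r tau.
    by rewrite eqEcard kr discord_set_proj_spec.
  exact: subxx.
have := no_min r0; rewrite r0a /= => /negbT/negP[].
by apply/forallP => r; apply/implyP; apply: r0_min.
Qed.

End Projection.

Definition top_union n (a b : seq 'I_n) := a ++ [seq x <- b | x \notin a].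

Definition fibre n (a b : seq 'I_n) (rho : 'S_n) :=
  [set tau in topk b | proj (topk a) tau == rho].

Section Fibres.
Variables (n : nat) (a b : seq 'I_n).
Hypotheses (ua : uniq a) (ub : uniq b).
Implicit Types (rho tau : 'S_n) (x y : 'I_n).

Lemma mem_top_union x : (x \in top_union a b) = (x \in a) || (x \in b).
Proof. by rewrite mem_cat mem_filter; case: (x \in a). Qed.

Lemma top_union_uniq : uniq (top_union a b).
Proof.
rewrite cat_uniq ua filter_uniq // andbT /=.
by apply/hasPn => x; rewrite mem_filter => /andP[].
Qed.

Lemma proj_spec_topk_union rho tau : tau \in topk b -> proj_spec a rho tau ->
  rho \in topk (top_union a b).
Proof.
move=> tb [ra agr]; apply/(topkP _ top_union_uniq) => x xc.
apply: (pos_eq_index top_union_uniq xc) => y; rewrite !index_cat.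
have xlt : x \in a -> index x a < size a by rewrite index_mem.
have [xa|xa] := boolP (x \in a); have [ya|ya] := boolP (y \in a).
- exact: topk_pos_gt.
- rewrite (topk_pos_gt _ ua ra xa) (memNindex ya) !ltnNge (ltnW (xlt xa)).
  by rewrite (leq_trans (ltnW (xlt xa)) (leq_addr _ _)).
- by rewrite (topk_pos_lt _ ua ra ya) (memNindex xa) index_mem ya ltn_addr ?index_mem.
have xb : x \in b by move: xc; rewrite mem_top_union (negbTE xa).
have xb' : x \in [seq z <- b | z \notin a] by rewrite mem_filter xa.
by rewrite ltn_add2l agr // (topk_pos_gt _ ub tb xb) index_filter_lt.
Qed.

Lemma fibreP rho tau : rho \in topk a ->
  reflect (tau \in topk b /\ proj_spec a rho tau) (tau \in fibre a b rho).
Proof.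
move=> ra; rewrite /fibre [X in reflect _ X]in_set; apply: (iffP andP) => -[tb].
  by move=> /eqP <-; split; last exact: proj_specP.
by move=> spec; split => //; apply/eqP/(proj_spec_uniq ua (proj_specP ua tau)).
Qed.

Lemma card_fibre_le rho rho' :
  rho \in topk (top_union a b) -> rho' \in topk (top_union a b) ->
  #|fibre a b rho| <= #|fibre a b rho'|.
Proof.
move=> rc r'c; pose g := ((rho^-1) * rho')%g.
have gc : {in top_union a b, forall x, g x = x}.
  move=> x xc; rewrite permM.
  have -> : (rho^-1)%g x = (rho'^-1)%g x.
    apply: val_inj; rewrite /= -/(pos rho x) -/(pos rho' x).
    by rewrite ((topkP _ top_union_uniq) rc) // ((topkP _ top_union_uniq) r'c).
  by rewrite permKV.
have ra : rho \in topk a := subsetP (topk_catl _ _) _ rc.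
have r'a : rho' \in topk a := subsetP (topk_catl _ _) _ r'c.
rewrite -(card_imset _ (mulIg g)); apply/subset_leq_card/subsetP => _ /imsetP[tau tf ->].
have [tb spec] := fibreP tau ra tf.
have -> : rho' = (rho * g)%g by rewrite mulKVg.
apply/fibreP; first by rewrite mulKVg.
split; first by apply: topk_mulg tb => x xb; rewrite gc // mem_top_union xb orbT.
by apply: proj_spec_mulg spec => x xa; rewrite gc // mem_top_union xa.
Qed.

End Fibres.

Theorem lemma7 (n : nat) (a b : seq 'I_n) (ha : uniq a) (hb : uniq b)
    (rho : 'S_n) :
  #|[set tau in topk b | proj (topk a) tau == rho]|
    * #|topk (a ++ [seq x <- b | x \notin a])|
  = (if rho \in topk (a ++ [seq x <- b | x \notin a]) then #|topk b| else 0).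
Proof.
rewrite -/(fibre a b rho) -/(top_union a b).
have proj_in tau : tau \in topk b -> proj (topk a) tau \in topk (top_union a b).
  by move=> tb; exact: (proj_spec_topk_union ha hb tb (proj_specP ha tau)).
case: ifPn => rc.
  rewrite -[#|topk b|]sum1_card.
  rewrite (partition_big (proj (topk a)) (mem (topk (top_union a b)))); last exact: proj_in.
  rewrite (eq_bigr (fun _ => #|fibre a b rho|)) => [|r' r'c].
    by rewrite sum_nat_const mulnC.
  by rewrite sum1dep_card -/(fibre a b r'); apply/eqP; rewrite eqn_leq !card_fibre_le.
suff -> : fibre a b rho = set0 by rewrite cards0.
apply/setP => tau; rewrite in_set0 /fibre in_set; apply/negbTE/andP => -[tb /eqP rho_tau].
by move: rc; rewrite -rho_tau (proj_in _ tb).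
Qed.
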